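(* There is a universal constant $c>0$ such that: for any even integer $n\ge2$, any integer $k>1$, and any reals $G,\lambda>0$ with $G\ge 4\lambda$, there exist functions $f_1,\dots,f_n$ on $\mathbb{R}$ and an initialization $x_0$ satisfying Assumption (A) with parameters $n,\lambda,G$, such that for every step size $0<\eta\le\frac{1}{100\lambda n^2}$, SGD with random reshuffling satisfies \[ \mathbb{E}\Big[F(x_k)-\inf_xF(x)\Big]\;\ge\;c\cdot\min\left\{\lambda,\ \frac{G^2}{\lambda(nk)^2}\right\}. \]
   Context: Assumption (A) (parameters $n\ge 2$, $\lambda>0$, $G>0$, on $\mathbb{R}^d$): $F(x)=\frac1n\sum_{i=1}^n f_i(x)$, where each $f_i:\mathbb{R}^d\to\mathbb{R}$ is a convex quadratic function $f_i(x)=x^\top A_ix+b_i^\top x$ (with $A_i$ symmetric positive semidefinite); $F$ is $\lambda$-strongly convex with unique minimizer $x^*$; each $\nabla f_i$ is $L$-Lipschitz for some $L\le 3\lambda$; each $f_i$ satisfies $\|\nabla f_i(x)\|\le G$ for all $x$ with $\|x-x^*\|\le 1$; and the initialization satisfies $\|x_0-x^*\|\le 1$. SGD with random reshuffling with constant step size $\eta$: for each of $k$ epochs, a fresh uniformly random permutation $\pi$ of $\{1,\dots,n\}$ (independent across epochs) is drawn and the updates $x\leftarrow x-\eta\nabla f_{\pi(j)}(x)$, $j=1,\dots,n$, are performed; $x_t$ is the iterate at the end of epoch $t$. *)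

From Stdlib Require Import Reals.
From mathcomp Require Import ssreflect ssrfun ssrbool eqtype ssrnat seq
  choice fintype finfun fingroup perm.

Set Implicit Arguments.
Unset Strict Implicit.

(* Components: f_i(x) = a i * x^2 + b i * x on R (d = 1), i = 0..n-1.
   A_i = a i is a 1x1 symmetric PSD matrix iff a i >= 0. *)
Definition fq (a b : nat -> R) (i : nat) (x : R) : R :=
  (a i * x * x + b i * x)%R.

Definition gq (a b : nat -> R) (i : nat) (x : R) : R :=
  (2 * a i * x + b i)%R.

Definition sumR (n : nat) (g : nat -> R) : R :=
  foldr (fun i acc => (g i + acc)%R) 0%R (iota 0 n).

Definition Fobj (n : nat) (a b : nat -> R) (x : R) : R :=
  (/ INR n * sumR n (fun i => fq a b i x))%R.

Definition strongly_convex (lam : R) (F : R -> R) : Prop :=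
  forall x y t : R, (0 <= t <= 1)%R ->
    (F (t * x + (1 - t) * y) <=
       t * F x + (1 - t) * F y - lam / 2 * t * (1 - t) * (x - y) * (x - y))%R.

Definition unique_minimizer (F : R -> R) (xs : R) : Prop :=
  forall y : R, y <> xs -> (F xs < F y)%R.

Definition assumptionA (n : nat) (lam G : R) (a b : nat -> R) (xs x0 : R)
  : Prop :=
  (2 <= n)%N /\ (0 < lam)%R /\ (0 < G)%R /\
  (forall i, (i < n)%N -> (0 <= a i)%R) /\
  strongly_convex lam (Fobj n a b) /\
  unique_minimizer (Fobj n a b) xs /\
  (exists L : R, (L <= 3 * lam)%R /\
     forall i, (i < n)%N -> forall x y : R,
       (Rabs (gq a b i x - gq a b i y) <= L * Rabs (x - y))%R) /\
  (forall i, (i < n)%N -> forall x : R,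
       (Rabs (x - xs) <= 1)%R -> (Rabs (gq a b i x) <= G)%R) /\
  (Rabs (x0 - xs) <= 1)%R.

Definition epoch (n : nat) (a b : nat -> R) (eta : R) (p : 'S_n) (x : R) : R :=
  foldl (fun y (j : 'I_n) => (y - eta * gq a b (nat_of_ord (p j)) y)%R)
        x (enum 'I_n).

Definition rr_iter (n k : nat) (a b : nat -> R) (eta x0 : R)
  (s : {ffun 'I_k -> 'S_n}) : R :=
  foldl (fun y (t : 'I_k) => epoch a b eta (s t) y) x0 (enum 'I_k).

(* expectation over k independent uniformly random permutations:
   uniform average over all k-tuples of permutations *)
Definition expect_rr (n k : nat) (g : {ffun 'I_k -> 'S_n} -> R) : R :=
  (/ INR #|{: {ffun 'I_k -> 'S_n}}| *
   foldr (fun s acc => (g s + acc)%R) 0%R (enum {: {ffun 'I_k -> 'S_n}}))%R.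

From HB Require Import structures.
From Stdlib Require Import Reals Lra Psatz.
From mathcomp Require Import ssreflect ssrfun ssrbool eqtype ssrnat seq
  choice fintype finfun fingroup perm bigop.
Set Implicit Arguments.
Unset Strict Implicit.
Open Scope R_scope.

(* Write n = 2m and take, in dimension one, f_i(x) = (G/2) x for i < m and
   f_i(x) = lam x^2 - (G/2) x for i >= m.  Then F(x) = lam/2 x^2, x* = 0, and
   we start at x0 = 1.  A gradient step on a linear component is the shift
   y |-> y - v (v = eta G/2); on a quadratic one it is y |-> r y + v
   (r = 1 - 2 eta lam).  One epoch is therefore affine, y |-> r^m y + B, and
   the offsets of an order and of its reversal satisfy
   B + B_rev >= (v/2)(1 - r^m), because a shift seen by a contracting steps
   in one order is seen by m - a in the other and r^a + r^(m-a) <= 1 + r^m.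
   Reversing all k permutations is an involution of the sample space, so
   the expectation may be computed over pairs; in every pair the mean of the
   two final iterates is at least W = P + (eta G/8)(1 - P), P = r^(mk), and
   convexity of x^2 gives E[F(x_k) - F(0)] >= lam/2 W^2.  A case analysis
   (P >= 1/2 when eta lam n k <= 1/2, otherwise eta G/8 >= G/(16 lam n k))
   turns this into the bound with c = 1/512. *)

(* Real addition as a commutative monoid, so that bigop's reindexing lemmas
   (here perm_big) apply to real sums. *)
HB.instance Definition _ := Monoid.isComLaw.Build R 0 Rplus
  (fun x y z => esym (Rplus_assoc x y z)) Rplus_comm Rplus_0_l.

Definition sumL {T : Type} (l : seq T) (h : T -> R) : R :=
  foldr (fun s acc => h s + acc) 0 l.

Lemma sumL_perm (T : eqType) (l1 l2 : seq T) (h : T -> R) :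
  perm_eq l1 l2 -> sumL l1 h = sumL l2 h.
Proof.
have big_sumL l : sumL l h = \big[Rplus/0]_(s <- l) h s.
  by elim: l => [|x l IH]; rewrite ?big_nil ?big_cons //= IH.
by move=> Hp; rewrite !big_sumL (perm_big _ Hp).
Qed.

Lemma sumL_map (T U : Type) (l : seq T) (f : T -> U) (h : U -> R) :
  sumL (map f l) h = sumL l (fun x => h (f x)).
Proof. by elim: l => [|x l IH] //=; rewrite -IH. Qed.

Lemma sumL_add (T : Type) (l : seq T) (g h : T -> R) :
  sumL l (fun x => g x + h x) = sumL l g + sumL l h.
Proof. by elim: l => [|x l IH] /=; [lra | rewrite IH; lra]. Qed.

Lemma sumL_cat (T : Type) (l1 l2 : seq T) (h : T -> R) :
  sumL (l1 ++ l2) h = sumL l1 h + sumL l2 h.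
Proof. by elim: l1 => [|x l IH] /=; [lra | rewrite IH; lra]. Qed.

Lemma sumL_ge (T : Type) (l : seq T) (h : T -> R) (c : R) :
  (forall x, h x >= c) -> sumL l h >= INR (size l) * c.
Proof.
move=> H; elim: l => [|x l IH]; first by rewrite /= Rmult_0_l; lra.
rewrite [size _]/= S_INR; have := H x; rewrite /sumL /= -/(sumL l h); lra.
Qed.

Lemma sumL_const_in (T : eqType) (l : seq T) (h : T -> R) (c : R) :
  {in l, forall x, h x = c} -> sumL l h = INR (size l) * c.
Proof.
elim: l => [|x l IH] H; first by rewrite /= Rmult_0_l.
rewrite [size _]/= S_INR /sumL /= -/(sumL l h) IH => [|y Hy]; last first.
  by apply: H; rewrite in_cons Hy orbT.
rewrite (H x) ?mem_head //; ring.
Qed.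

Lemma uniform_average_pairing (T : finType) (t0 : T) (phi : T -> T)
    (g : T -> R) (D : R) :
  involutive phi -> (forall s, g s + g (phi s) >= 2 * D) ->
  / INR #|T| * sumL (enum T) g >= D.
Proof.
move=> phiK Hpair.
have Hphi : perm_eq (map phi (enum T)) (enum T).
  apply: uniq_perm; first by rewrite (map_inj_uniq (inv_inj phiK)) enum_uniq.
    exact: enum_uniq.
  by move=> x; rewrite mem_enum; apply/mapP; exists (phi x); rewrite ?mem_enum ?phiK.
have Hsym : sumL (enum T) (fun s => g (phi s)) = sumL (enum T) g.
  by rewrite -sumL_map; apply: sumL_perm.
have Htwice := sumL_ge (enum T) Hpair.
rewrite sumL_add Hsym in Htwice.
have HN : 0 < INR #|T| by apply: lt_0_INR; apply/ltP/card_gt0P; exists t0.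
have EN : INR #|T| = INR (size (enum T)) by rewrite cardE.
rewrite EN in HN *.
apply: Rle_ge; apply: (Rmult_le_reg_l _ _ _ HN).
rewrite -Rmult_assoc Rinv_r; [lra | exact: Rgt_not_eq].
Qed.

Lemma pow_unit_interval (r : R) (d : nat) : 0 <= r <= 1 -> 0 <= r ^ d <= 1.
Proof. move=> Hr; rewrite -(pow1 d); split; [apply: pow_le | apply: pow_incr]; lra. Qed.

Lemma bernoulli_lower (r : R) (j : nat) : 0 <= r <= 1 -> r ^ j >= 1 - INR j * (1 - r).
Proof.
move=> Hr; elim: j => [|j IH]; first by rewrite /=; lra.
rewrite S_INR /=.
have := Rmult_le_pos _ _ (pos_INR j) (pow2_ge_0 (1 - r)); rewrite /=; nra.
Qed.

Fixpoint geom (r : R) (j : nat) : R :=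
  match j with O => 0 | S j => geom r j + r ^ j end.

Lemma geom_closed (r : R) (j : nat) : (1 - r) * geom r j = 1 - r ^ j.
Proof. by elim: j => [|j IH] /=; [ring | rewrite Rmult_plus_distr_l IH; ring]. Qed.

(* For r close to 1 (j^2 (1-r) <= 1/2), the geometric sum exceeds the chord
   average j (1 + r^j)/2 by at least j (1-r)/4: this excess is the bias that
   survives averaging an order with its reversal. *)
Lemma geom_excess (r : R) (j : nat) : 0 <= r <= 1 ->
  INR j * INR j * (1 - r) <= 1/2 ->
  geom r j - INR j * (1 + r ^ j) / 2 >= INR j * (1 - r) / 4.
Proof.
move=> Hr; elim: j => [|j IH]; first by rewrite /=; lra.
rewrite S_INR => Hj.
have hj := pos_INR j.
have IH' : geom r j - INR j * (1 + r ^ j) / 2 >= INR j * (1 - r) / 4 by apply: IH; nra.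
have hb := bernoulli_lower j Hr.
change (geom r j.+1) with (geom r j + r ^ j); change (r ^ j.+1) with (r * r ^ j).
have Hj' : INR j * (INR j + 1) * (1 - r) <= 1/2 by nra.
have : (r ^ j - (1 - INR j * (1 - r))) * (1 + (INR j + 1) * (1 - r)) >= 0.
  apply: Rle_ge; apply: Rmult_le_pos; nra.
nra.
Qed.

Section EpochAlgebra.

Variables (m : nat) (r v : R).

Definition rr_step (y : R) (i : nat) : R := if (i < m)%N then y - v else r * y + v.

Definition n_contract (l : seq nat) : nat := count (fun i => m <= i)%N l.
Definition n_shift (l : seq nat) : nat := count (fun i => i < m)%N l.

Definition offset (l : seq nat) : R := foldl rr_step 0 l.

Lemma rr_steps_affine (l : seq nat) (x : R) :
  foldl rr_step x l = r ^ n_contract l * x + offset l.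
Proof.
rewrite /offset; elim: l x => [|i l IH] x /=; first ring.
rewrite IH [in RHS]IH /rr_step /n_contract /=.
by case: ltnP => _ /=; rewrite ?add0n ?add1n /=; ring.
Qed.

(* The extra weight r^d on the
   reversed offset accounts for contractions performed after the prefix, which
   makes the statement amenable to induction; d = 0 is the case of interest. *)
Lemma offset_reversal (l : seq nat) (d : nat) : 0 <= v -> 0 <= r <= 1 ->
  offset l + r ^ d * offset (rev l) >=
  v * ((1 + r ^ d) * geom r (n_contract l)
       - INR (n_shift l) * (1 + r ^ (n_contract l + d))).
Proof.
move=> Hv Hr; elim: l d => [|i l IH] d; first by rewrite /offset /n_contract /n_shift /=; lra.
have Efront : offset (i :: l) = r ^ n_contract l * rr_step 0 i + offset l.
  by rewrite /offset /= rr_steps_affine.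
have Eback : offset (rev (i :: l)) = rr_step (offset (rev l)) i.
  by rewrite /offset rev_cons -cats1 foldl_cat.
rewrite Efront Eback.
have hc := pow_unit_interval (n_contract l) Hr; have hd := pow_unit_interval d Hr.
case: (ltnP i m) => Hi.
- have -> : n_contract (i :: l) = n_contract l by rewrite /n_contract /= leqNgt Hi.
  have -> : n_shift (i :: l) = (n_shift l).+1 by rewrite /n_shift /= Hi.
  rewrite /rr_step Hi S_INR; have := IH d; rewrite !pow_add.
  have : r ^ n_contract l + r ^ d <= 1 + r ^ n_contract l * r ^ d by nra.
  nra.
- have -> : n_contract (i :: l) = (n_contract l).+1 by rewrite /n_contract /= Hi.
  have -> : n_shift (i :: l) = n_shift l by rewrite /n_shift /= ltnNge Hi.
  rewrite /rr_step ltnNge Hi /=; have := IH d.+1; rewrite addnS /= !pow_add.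
  have := geom_closed r (n_contract l); nra.
Qed.

Lemma balanced_pair (l : seq nat) (x y : R) : 0 <= v -> 0 <= r <= 1 ->
  n_contract l = m -> n_shift l = m -> INR m * INR m * (1 - r) <= 1/2 ->
  foldl rr_step x l + foldl rr_step y (rev l) >= r ^ m * (x + y) + v / 2 * (1 - r ^ m).
Proof.
move=> Hv Hr Hc Hs Hm.
have Hc' : n_contract (rev l) = m by rewrite /n_contract count_rev.
rewrite !rr_steps_affine Hc Hc'.
have := offset_reversal l 0 Hv Hr; rewrite Hc Hs addn0 /= Rmult_1_l.
have := geom_excess Hr Hm; have := bernoulli_lower m Hr.
have hm := pos_INR m.
nra.
Qed.

End EpochAlgebra.

Definition rev_perm (n : nat) : 'S_n := perm (@rev_ord_inj n).

Definition perm_values (n : nat) (p : 'S_n) : seq nat :=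
  map (fun j => nat_of_ord (p j)) (enum 'I_n).

Lemma map_rev_ord (n : nat) : map (@rev_ord n) (enum 'I_n) = rev (enum 'I_n).
Proof.
apply: (inj_map val_inj); rewrite map_rev -map_comp.
rewrite (eq_map (_ : val \o @rev_ord n =1 (fun i => n - i.+1)%N \o val)) //.
rewrite map_comp val_enum_ord.
apply: (@eq_from_nth _ 0%N); rewrite ?size_map ?size_rev ?size_iota // => i Hi.
rewrite (nth_map 0%N) ?size_iota // nth_rev ?size_iota // !nth_iota //.
by rewrite ltn_subrL (leq_ltn_trans _ Hi).
Qed.

Lemma rev_perm_values (n : nat) (p : 'S_n) :
  perm_values (rev_perm n * p)%g = rev (perm_values p).
Proof.
rewrite /perm_values -map_rev -map_rev_ord -[in RHS]map_comp.
by apply: eq_map => j /=; rewrite permM permE.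
Qed.

Lemma rev_permK (n : nat) (p : 'S_n) : (rev_perm n * (rev_perm n * p))%g = p.
Proof. by apply/permP => j; rewrite !permM !permE rev_ordK. Qed.

Lemma perm_values_iota (n : nat) (p : 'S_n) : perm_eq (perm_values p) (iota 0 n).
Proof.
rewrite /perm_values -val_enum_ord (map_comp val p); apply: perm_map.
rewrite -codomE; apply: uniq_perm; rewrite ?enum_uniq //.
  by rewrite codomE (map_inj_uniq perm_inj) enum_uniq.
by move=> j; rewrite perm_onto mem_enum.
Qed.

Lemma perm_values_counts (m : nat) (p : 'S_(m + m)) :
  n_contract m (perm_values p) = m /\ n_shift m (perm_values p) = m.
Proof.
have Hp := perm_values_iota p.
have Hshift : n_shift m (perm_values p) = m.
  rewrite /n_shift (seq.permP Hp) -size_filter.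
  have := filter_iota_ltn 0 (leq_addr m m); rewrite add0n => ->; by rewrite size_iota.
split=> //.
have Hsum := count_predC (fun i => i < m)%N (perm_values p).
rewrite size_map size_enum_ord -/(n_shift m _) Hshift in Hsum.
have -> : n_contract m (perm_values p) = count (predC (fun i => i < m)%N) (perm_values p).
  by apply: eq_count => i /=; rewrite leqNgt.
exact: (addnI Hsum).
Qed.

Section HardInstance.

Variables (m : nat) (lam G : R).

Definition hard_a : nat -> R := fun i => if (i < m)%N then 0 else lam.
Definition hard_b : nat -> R := fun i => if (i < m)%N then G / 2 else - (G / 2).

(* The linear terms cancel in the average: F(x) = lam/2 x^2. *)
Lemma hard_objective (x : R) : (0 < m)%N ->
  Fobj (m + m) hard_a hard_b x = lam / 2 * x * x.
Proof.
move=> Hm.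
rewrite /Fobj /sumR -/(sumL (iota 0 (m + m)) _) iotaD sumL_cat add0n.
rewrite (@sumL_const_in _ (iota 0 m) _ (G / 2 * x)); last first.
  by move=> i; rewrite mem_iota add0n => /andP[_ Hi]; rewrite /fq /hard_a /hard_b Hi; ring.
rewrite (@sumL_const_in _ (iota m m) _ (lam * x * x - G / 2 * x)); last first.
  by move=> i; rewrite mem_iota => /andP[Hi _]; rewrite /fq /hard_a /hard_b ltnNge Hi /=; ring.
have : 0 < INR m by apply: lt_0_INR; apply/ltP.
rewrite !size_iota plus_INR => Hm'; field; lra.
Qed.

(* The instance satisfies Assumption (A) with x* = 0 and x0 = 1; the gradient
   bound on [-1,1] is where G >= 4 lam is used. *)
Lemma hard_assumptionA : (0 < m)%N -> 0 < lam -> G >= 4 * lam ->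
  assumptionA (m + m) lam G hard_a hard_b 0 1.
Proof.
move=> Hm Hlam HG.
have HF := hard_objective^~ Hm.
split; first exact: (leq_add Hm Hm).
split; first done; split; first lra.
split; first by move=> i _; rewrite /hard_a; case: ifP => _; lra.
split; first by move=> x y t _; rewrite !HF; apply: Req_le; ring.
split.
  move=> y Hy; rewrite !HF.
  by have := Rsqr_pos_lt y Hy; rewrite /Rsqr; nra.
split.
  exists (2 * lam); split; first lra.
  move=> i _ x y; rewrite /gq /hard_a /hard_b; case: ifP => _.
    have -> : 2 * 0 * x + G / 2 - (2 * 0 * y + G / 2) = 0 by ring.
    by rewrite Rabs_R0; have := Rabs_pos (x - y); nra.
  have -> : 2 * lam * x + - (G / 2) - (2 * lam * y + - (G / 2)) = 2 * lam * (x - y) by ring.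
  by rewrite Rabs_mult (Rabs_pos_eq (2 * lam)); lra.
split.
  move=> i _ x; rewrite Rminus_0_r => Hx.
  have Hx1 := Rle_abs x; have := Rle_abs (- x); rewrite Rabs_Ropp => Hx2.
  by apply: Rabs_le; rewrite /gq /hard_a /hard_b; case: ifP => _; nra.
by rewrite Rminus_0_r Rabs_R1; lra.
Qed.

Lemma hard_gradient_step (eta y : R) (i : nat) :
  y - eta * gq hard_a hard_b i y = rr_step m (1 - 2 * eta * lam) (eta * G / 2) y i.
Proof. by rewrite /gq /hard_a /hard_b /rr_step; case: ifP => _; field. Qed.

Lemma hard_epoch (eta : R) (p : 'S_(m + m)) (x : R) :
  epoch hard_a hard_b eta p x =
  foldl (rr_step m (1 - 2 * eta * lam) (eta * G / 2)) x (perm_values p).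
Proof.
by rewrite /epoch /perm_values; elim: (enum _) x => [|j l IH] x //=; rewrite IH hard_gradient_step.
Qed.

Lemma hard_epoch_pair (eta : R) (p : 'S_(m + m)) (x y : R) :
  0 <= eta * G -> 0 <= 1 - 2 * eta * lam <= 1 -> INR m * INR m * (2 * eta * lam) <= 1/2 ->
  let q := (1 - 2 * eta * lam) ^ m in
  epoch hard_a hard_b eta p x + epoch hard_a hard_b eta (rev_perm _ * p)%g y >=
  q * (x + y) + eta * G / 4 * (1 - q).
Proof.
move=> HG Hr Hm q.
have [Hc Hs] := perm_values_counts p.
rewrite !hard_epoch rev_perm_values.
have Hv : 0 <= eta * G / 2 by lra.
have Hm' : INR m * INR m * (1 - (1 - 2 * eta * lam)) <= 1/2 by lra.
by have := balanced_pair x y Hv Hr Hc Hs Hm'; rewrite -/q; lra.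
Qed.

End HardInstance.

Lemma paired_iterates (I : Type) (e e' : I -> R -> R) (q c : R) : 0 <= q ->
  (forall t z z', e t z + e' t z' >= q * (z + z') + 2 * c * (1 - q)) ->
  forall (L : seq I) (x y : R),
  (foldl (fun z t => e t z) x L + foldl (fun z t => e' t z) y L) / 2 >=
  q ^ size L * ((x + y) / 2) + c * (1 - q ^ size L).
Proof.
move=> Hq Hstep; elim=> [|t L IH] x y /=; first lra.
have := IH (e t x) (e' t y); have := Hstep t x y.
have := pow_le q (size L) Hq; nra.
Qed.

Definition reverse_all (k n : nat) (s : {ffun 'I_k -> 'S_n}) : {ffun 'I_k -> 'S_n} :=
  [ffun t => (rev_perm n * s t)%g].

Lemma reverse_all_involutive (k n : nat) : involutive (@reverse_all k n).
Proof. by move=> s; apply/ffunP => t; rewrite !ffunE rev_permK. Qed.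

Lemma hard_iterates_pair (m k : nat) (lam G eta : R) (s : {ffun 'I_k -> 'S_(m + m)}) :
  0 <= eta * G -> 0 <= 1 - 2 * eta * lam <= 1 -> INR m * INR m * (2 * eta * lam) <= 1/2 ->
  let P := ((1 - 2 * eta * lam) ^ m) ^ k in
  (rr_iter (hard_a m lam) (hard_b m G) eta 1 s +
   rr_iter (hard_a m lam) (hard_b m G) eta 1 (reverse_all s)) / 2 >=
  P + eta * G / 8 * (1 - P).
Proof.
move=> HG Hr Hm P.
have Hq := pow_unit_interval m Hr.
have Hstep t z z' :
    epoch (hard_a m lam) (hard_b m G) eta (s t) z +
    epoch (hard_a m lam) (hard_b m G) eta (reverse_all s t) z' >=
    (1 - 2 * eta * lam) ^ m * (z + z') + 2 * (eta * G / 8) * (1 - (1 - 2 * eta * lam) ^ m).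
  by rewrite ffunE; have /= := hard_epoch_pair (s t) z z' HG Hr Hm; lra.
have := paired_iterates (proj1 Hq) Hstep (enum 'I_k) 1 1.
have -> : (1 + 1) / 2 = 1 by field.
by rewrite size_enum_ord -/P Rmult_1_r; apply.
Qed.

Lemma mean_square_lower (X Y W : R) : 0 <= W -> (X + Y) / 2 >= W -> X * X + Y * Y >= 2 * (W * W).
Proof. move=> HW Hmean; have := pow2_ge_0 (X - Y); rewrite /=; nra. Qed.

Lemma hard_expected_gap (m k : nat) (lam G eta : R) :
  (0 < m)%N -> 0 < lam -> 0 < G -> 0 < eta -> eta * lam * (INR m * INR m) <= 1/400 ->
  let P := ((1 - 2 * eta * lam) ^ m) ^ k in
  let W := P + eta * G / 8 * (1 - P) in
  expect_rr (fun s : {ffun 'I_k -> 'S_(m + m)} =>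
    Fobj (m + m) (hard_a m lam) (hard_b m G) (rr_iter (hard_a m lam) (hard_b m G) eta 1 s)
    - Fobj (m + m) (hard_a m lam) (hard_b m G) 0) >= lam / 2 * (W * W).
Proof.
move=> Hm Hlam HG Heta Hstep P W.
have HmR : 1 <= INR m by apply: (le_INR 1); apply/leP.
have Hr : 0 <= 1 - 2 * eta * lam <= 1 by nra.
have HP : 0 <= P <= 1 by apply: pow_unit_interval; apply: pow_unit_interval.
have HW : 0 <= W.
  rewrite /W; have : 0 <= eta * G / 8 * (1 - P) by apply: Rmult_le_pos; nra.
  lra.
rewrite /expect_rr -/(sumL _ _).
apply: (uniform_average_pairing [ffun => 1%g] (@reverse_all_involutive k (m + m))) => s.
rewrite !hard_objective //.
have HG' : 0 <= eta * G by nra.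
have Hm2 : INR m * INR m * (2 * eta * lam) <= 1/2 by nra.
have := hard_iterates_pair s HG' Hr Hm2.
rewrite -/P -/W => /(mean_square_lower HW); nra.
Qed.

(* Turning lam/2 W^2 into the claimed rate: either eta lam N <= 1/2, so that
   P >= 1/2, or eta G/8 >= G/(16 lam N) and W >= min(1, eta G/8). *)
Lemma gap_case_analysis (lam G eta N P : R) :
  0 < lam -> 0 < G -> 0 < eta -> 0 <= P <= 1 -> P >= 1 - eta * lam * N ->
  let W := P + eta * G / 8 * (1 - P) in
  lam / 2 * (W * W) >= 1 / 512 * Rmin lam (G * G / (lam * N * N)).
Proof.
move=> Hlam HG Heta HP HPN W.
have [w Hw] : exists w, w = eta * G / 8 by eexists.
have HW : W = P + w * (1 - P) by rewrite Hw.
clearbody W.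
have Hw0 : 0 <= w by rewrite Hw; nra.
have Hmin_l := Rmin_l lam (G * G / (lam * N * N)).
have Hmin_r := Rmin_r lam (G * G / (lam * N * N)).
case: (Rle_lt_dec (eta * lam * N) (1/2)) => HN.
  have HW2 : W >= 1/2 by nra.
  have : 0 <= lam * (W * W - 1/4) by apply: Rmult_le_pos; nra.
  lra.
case: (Rle_lt_dec 1 w) => Hw1.
  have HW1 : W >= 1 by nra.
  have : 0 <= lam * (W * W - 1) by apply: Rmult_le_pos; nra.
  lra.
have HWw : W >= w by nra.
have Hel : 0 < eta * lam by apply: Rmult_lt_0_compat.
have HNpos : 0 < N by apply: (Rmult_lt_reg_l (eta * lam)) => //; lra.
have Hratio : G / (lam * N) <= 16 * w.
  have -> : 16 * w = (16 * w * (lam * N)) * / (lam * N) by field; nra.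
  apply: Rmult_le_compat_r; first by apply: Rlt_le; apply: Rinv_0_lt_compat; nra.
  rewrite Hw; nra.
have Hsq : G * G / (lam * N * N) <= 256 * lam * (w * w).
  have -> : G * G / (lam * N * N) = lam * ((G / (lam * N)) * (G / (lam * N))) by field; nra.
  have Hpos : 0 <= G / (lam * N) by apply: Rlt_le; apply: Rdiv_lt_0_compat; nra.
  have Hsq : G / (lam * N) * (G / (lam * N)) <= 16 * w * (16 * w) by apply: Rmult_le_compat.
  have := Rmult_le_compat_l lam _ _ (Rlt_le _ _ Hlam) Hsq; lra.
have : 0 <= lam * (W * W - w * w) by apply: Rmult_le_pos; nra.
lra.
Qed.

Lemma contraction_power (m k : nat) (a : R) : 0 <= a <= 1 ->
  0 <= ((1 - a) ^ m) ^ k <= 1 /\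
  ((1 - a) ^ m) ^ k >= 1 - a / 2 * (INR (m + m) * INR k).
Proof.
move=> Ha.
have Hr : 0 <= 1 - a <= 1 by lra.
have Hq := pow_unit_interval m Hr.
have Hqb := bernoulli_lower m Hr.
have HPb := bernoulli_lower k Hq.
split; first exact: pow_unit_interval.
have Hmq : 1 - (1 - a) ^ m <= INR m * a by lra.
by have := Rmult_le_compat_l _ _ _ (pos_INR k) Hmq; rewrite plus_INR; lra.
Qed.

Theorem proposition3 :
  exists c : R, (0 < c)%R /\
  forall (n k : nat) (lam G : R),
    (2 <= n)%N -> ~~ odd n -> (1 < k)%N ->
    (0 < lam)%R -> (0 < G)%R -> (G >= 4 * lam)%R ->
    exists (a b : nat -> R) (xs x0 : R),
      assumptionA n lam G a b xs x0 /\
      forall eta : R, (0 < eta)%R ->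
        (eta <= / (100 * lam * INR n * INR n))%R ->
        (expect_rr (fun s : {ffun 'I_k -> 'S_n} =>
            (Fobj n a b (rr_iter a b eta x0 s) - Fobj n a b xs)%R)
         >= c * Rmin lam (G * G / (lam * (INR n * INR k) * (INR n * INR k))))%R.
Proof.
exists (1 / 512); split; first lra.
move=> n k lam G Hn2 Heven _ Hlam HG HG4.
have [m Hnm] : exists m, n = (m + m)%N.
  by exists n./2; rewrite addnn -[LHS]odd_double_half (negbTE Heven).
subst n.
have Hm : (0 < m)%N by rewrite lt0n; apply: contraTneq Hn2 => ->.
exists (hard_a m lam), (hard_b m G), 0, 1; split; first exact: hard_assumptionA.
move=> eta Heta Heta_max.
have HmR : 1 <= INR m by apply: (le_INR 1); apply/leP.
have Hsmall : eta * lam * (INR m * INR m) <= 1 / 400.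
  rewrite plus_INR in Heta_max.
  have HD : 0 < 100 * lam * (INR m + INR m) * (INR m + INR m).
    by repeat apply: Rmult_lt_0_compat; lra.
  have := Rmult_le_compat_r _ _ _ (Rlt_le _ _ HD) Heta_max.
  rewrite Rinv_l; [lra | exact: Rgt_not_eq].
have Ha : 0 <= 2 * eta * lam <= 1 by nra.
have [HP HPb] := contraction_power m k Ha.
apply: Rge_trans (hard_expected_gap k Hm Hlam HG Heta Hsmall) _.
by apply: gap_case_analysis => //; lra.
Qed.
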